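(* Every reflexive forest $T$ (a reflexive graph with no cycles), regarded as a simplicial complex, is cofibrant in the Thomason model structure on $\mathbf{Cpx}$. Furthermore, any inclusion of a tree into another tree is a Thomason cofibration.
   Context: A simplicial complex consists of a vertex set and a collection of nonempty finite subsets (simplices) containing all singletons and closed under nonempty subsets; maps are vertex functions preserving simplices; $\mathbf{Cpx}$ is the category. Reflexive graphs are the complexes whose simplices have at most two elements; a tree is a connected reflexive graph without cycles and a forest is a coproduct of trees. $\mathbf{\Delta}^n$ is the complex on $\{0,\dots,n\}$ with all nonempty subsets simplices, $\mathrm{Sing}(K)_n=\mathbf{Cpx}(\mathbf{\Delta}^n,K)$, $\mathrm{Ex}$ is the right adjoint of barycentric subdivision. Thomason model structure on $\mathbf{Cpx}$: $f$ is a weak equivalence iff $\mathrm{Sing}(f)$ is a weak homotopy equivalence, a fibration iff $\mathrm{Ex}^2\mathrm{Sing}(f)$ is a Kan fibration, and a cofibration iff it has the left lifting property against all trivial fibrations. *)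

From mathcomp Require Import all_boot.
From Stdlib Require Import Relation_Operators ProofIrrelevance FunctionalExtensionality.

Unset Strict Implicit.
Unset Printing Implicit Defensive.

(* The simplex category: [n] = 'I_n.+1, morphisms = monotone maps.     *)

Definition dmono {m n} (f : {ffun 'I_m.+1 -> 'I_n.+1}) : bool :=
  [forall i : 'I_m.+1, forall j : 'I_m.+1, (i <= j) ==> (f i <= f j)].

Definition dmap m n := {f : {ffun 'I_m.+1 -> 'I_n.+1} | dmono f}.

Definition dfun {m n} (t : dmap m n) : 'I_m.+1 -> 'I_n.+1 := fun i => sval t i.

Lemma dmonoP {m n} (t : dmap m n) (i j : 'I_m.+1) : i <= j -> dfun t i <= dfun t j.
Proof.
move=> hij; have /forallP /(_ i) /forallP /(_ j) /implyP := svalP t; exact.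
Qed.

Lemma dcomp_mono {m n p} (s : dmap n p) (t : dmap m n) :
  dmono [ffun i => dfun s (dfun t i)].
Proof.
apply/forallP=> i; apply/forallP=> j; apply/implyP=> hij; rewrite !ffunE.
by apply: dmonoP; apply: dmonoP.
Qed.

Definition dcomp {m n p} (s : dmap n p) (t : dmap m n) : dmap m p :=
  exist (@dmono m p) _ (dcomp_mono s t).

Lemma did_mono n : dmono [ffun i : 'I_n.+1 => i].
Proof. by apply/forallP=> i; apply/forallP=> j; rewrite !ffunE; apply/implyP. Qed.

Definition did n : dmap n n := exist (@dmono n n) _ (did_mono n).

Lemma dconst_mono m {n} (j : 'I_n.+1) : dmono [ffun _ : 'I_m.+1 => j].
Proof. by apply/forallP=> i; apply/forallP=> i'; rewrite !ffunE leqnn implybT. Qed.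

Definition dconst m {n} (j : 'I_n.+1) : dmap m n := exist (@dmono m n) _ (dconst_mono m j).

Record psset := PSSet {
  ssimp :> nat -> Type;
  sact : forall m n, dmap m n -> ssimp n -> ssimp m }.
Arguments sact {X m n} t x : rename.
Arguments PSSet ssimp sact : assert.

Definition is_sset (X : psset) : Prop :=
  (forall n (x : X n), sact (did n) x = x) /\
  (forall m n p (t : dmap m n) (s : dmap n p) (x : X p),
      sact (dcomp s t) x = sact t (sact s x)).

Record shom (X Y : psset) := SHom {
  shf :> forall n, X n -> Y n;
  shnat : forall m n (t : dmap m n) (x : X n), shf m (sact t x) = sact t (shf n x) }.
Arguments shf {X Y} s n x.
Arguments SHom {X Y} shf shnat.
Arguments shf {X Y} s n x.
Arguments shnat {X Y} s m n t x.

Lemma scomp_nat {X Y Z : psset} (g : shom Y Z) (f : shom X Y) m n (t : dmap m n) (x : X n) :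
  g m (f m (sact t x)) = sact t (g n (f n x)).
Proof. by rewrite !shnat. Qed.

Definition scomp {X Y Z : psset} (g : shom Y Z) (f : shom X Y) : shom X Z :=
  @SHom X Z (fun n x => g n (f n x)) (scomp_nat g f).

Definition Delta (n : nat) : psset :=
  PSSet (fun m => dmap m n) (fun m k t s => dcomp s t).

Definition inhornb {m n} (k : 'I_n.+1) (s : dmap m n) : bool :=
  [exists i : 'I_n.+1, (i != k) && (i \notin codom (dfun s))].

Lemma inhorn_act {m l n} {k : 'I_n.+1} (t : dmap m l) (s : {s : dmap l n | inhornb k s}) :
  inhornb k (dcomp (sval s) t).
Proof.
case: s => s /= /existsP [i /andP [ik ni]].
apply/existsP; exists i; rewrite ik /=; apply: contra ni => /codomP [j ->].
by rewrite /dfun /= ffunE; apply: codom_f.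
Qed.

Definition Horn {n : nat} (k : 'I_n.+1) : psset :=
  PSSet (fun m => {s : dmap m n | inhornb k s})
        (fun m l t s => exist (@inhornb m n k) _ (inhorn_act t s)).

Definition kan_fibration {X Y : psset} (p : shom X Y) : Prop :=
  forall n (k : 'I_n.+2) (a : shom (Horn k) X) (b : shom (Delta n.+1) Y),
    (forall m (h : Horn k m), p m (a m h) = b m (sval h)) ->
    exists l : shom (Delta n.+1) X,
      (forall m (h : Horn k m), l m (sval h) = a m h) /\
      (forall m (t : Delta n.+1 m), p m (l m t) = b m t).

Definition kan_complex (Z : psset) : Prop :=
  forall n (k : 'I_n.+2) (a : shom (Horn k) Z),
    exists l : shom (Delta n.+1) Z, forall m (h : Horn k m), l m (sval h) = a m h.

Definition prod1 (X : psset) : psset :=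
  PSSet (fun m => (X m * dmap m 1)%type)
        (fun m n t p => (sact t p.1, dcomp p.2 t)).

(* an edge of Fun(X,Z) from g to h: a simplicial homotopy X x Delta^1 -> Z *)
Definition shomotopy {X Z : psset} (g h : shom X Z) : Prop :=
  exists H : shom (prod1 X) Z,
    (forall m (x : X m), H m (x, dconst m (ord0 : 'I_2)) = g m x) /\
    (forall m (x : X m), H m (x, dconst m (ord_max : 'I_2)) = h m x).

(* same class in pi_0 Fun(X,Z) *)
Definition shomotopic {X Z : psset} : shom X Z -> shom X Z -> Prop :=
  clos_refl_sym_trans _ (@shomotopy X Z).

(* Weak homotopy equivalence of simplicial sets (Kerodon Def. 3.2.4.1):
   for every Kan complex Z, precomposition
   pi_0 Fun(Y,Z) -> pi_0 Fun(X,Z) is bijective. *)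
Definition weak_homotopy_equivalence {X Y : psset} (f : shom X Y) : Prop :=
  forall Z : psset, is_sset Z -> kan_complex Z ->
    (forall g : shom X Z, exists h : shom Y Z, shomotopic (scomp h f) g) /\
    (forall h1 h2 : shom Y Z,
        shomotopic (scomp h1 f) (scomp h2 f) -> shomotopic h1 h2).

Record cpx := Cpx {
  cvert : Type;
  csimp : (cvert -> Prop) -> Prop;
  csimp_fin : forall S, csimp S ->
     exists (N : nat) (e : 'I_N -> cvert), forall v, S v <-> exists i, e i = v;
  csimp_ne : forall S, csimp S -> exists v, S v;
  csimp_single : forall v, csimp (fun w => w = v);
  csimp_sub : forall S T, csimp S -> (forall v, T v -> S v) -> (exists v, T v) -> csimp T }.
Arguments csimp_sub {c S T} _ _ _.

Record cmap (K L : cpx) := CMap {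
  cmf :> cvert K -> cvert L;
  cmap_simp : forall S, csimp K S -> csimp L (fun w => exists v, S v /\ cmf v = w) }.
Arguments cmf {K L} c v.
Arguments cmap_simp {K L} c {S} _.

Lemma sigP_eq {A : Type} {P : A -> Prop} (x y : {a : A | P a}) :
  sval x = sval y -> x = y.
Proof.
case: x => a pa; case: y => b pb /= eab; subst b.
by rewrite (proof_irrelevance _ pa pb).
Qed.

(* Sing(K)_n = Cpx(Delta^n, K) *)
Definition sing_pred (K : cpx) (n : nat) (s : 'I_n.+1 -> cvert K) : Prop :=
  csimp K (fun v => exists i, s i = v).

Definition sing_simp (K : cpx) (n : nat) := {s : 'I_n.+1 -> cvert K | sing_pred K n s}.

Lemma sing_act_proof {K : cpx} {m n} (t : dmap m n) (s : sing_simp K n) :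
  sing_pred K m (fun i => sval s (dfun t i)).
Proof.
apply: (csimp_sub (svalP s)).
- by move=> v [i <-]; exists (dfun t i).
- by exists (sval s (dfun t ord0)), ord0.
Qed.

Definition Sing (K : cpx) : psset :=
  PSSet (sing_simp K) (fun m n t s => exist (sing_pred K m) _ (sing_act_proof t s)).

Lemma singf_proof {K L : cpx} (f : cmap K L) {n} (s : sing_simp K n) :
  sing_pred L n (fun i => f (sval s i)).
Proof.
apply: (csimp_sub (cmap_simp f (svalP s))).
- by move=> w [i <-]; exists (sval s i); split=> //; exists i.
- by exists (f (sval s ord0)), ord0.
Qed.

Lemma singf_nat {K L : cpx} (f : cmap K L) m n (t : dmap m n) (s : Sing K n) :
  (exist (sing_pred L m) _ (singf_proof f (sact t s)) : Sing L m) =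
  sact t (exist (sing_pred L n) _ (singf_proof f s) : Sing L n).
Proof. exact: sigP_eq. Qed.

Definition Singf {K L : cpx} (f : cmap K L) : shom (Sing K) (Sing L) :=
  @SHom (Sing K) (Sing L) (fun n s => exist (sing_pred L n) _ (singf_proof f s)) (singf_nat f).

(* Ex: (Ex X)_n = sSet(sd Delta^n, X), sd Delta^n = nerve of the poset  *)
(* of nonempty subsets of [n]; its k-simplices are chains.             *)

Definition chainb {n k} (c : {ffun 'I_k.+1 -> {set 'I_n.+1}}) : bool :=
  [forall i : 'I_k.+1, c i != set0] && [forall i : 'I_k.+1, forall j : 'I_k.+1, (i <= j) ==> (c i \subset c j)].

Definition chain n k := {c : {ffun 'I_k.+1 -> {set 'I_n.+1}} | chainb c}.

Lemma chain_ne {n k} (c : chain n k) i : sval c i != set0.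
Proof. by case/andP: (svalP c) => /forallP. Qed.

Lemma chain_mono {n k} (c : chain n k) (i j : 'I_k.+1) : i <= j -> sval c i \subset sval c j.
Proof. by case/andP: (svalP c) => _ /forallP /(_ i) /forallP /(_ j) /implyP. Qed.

Lemma chain_pre_proof {n k m} (c : chain n k) (t : dmap m k) :
  chainb [ffun i => sval c (dfun t i)].
Proof.
apply/andP; split; apply/forallP=> i; rewrite ?ffunE ?chain_ne //.
apply/forallP=> j; apply/implyP=> hij; rewrite !ffunE.
by apply: chain_mono; apply: dmonoP.
Qed.

Definition chain_pre {n k m} (c : chain n k) (t : dmap m k) : chain n m :=
  exist (@chainb n m) _ (chain_pre_proof c t).

Lemma chain_img_proof {n p k} (t : dmap n p) (c : chain n k) :
  chainb [ffun i => dfun t @: sval c i].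
Proof.
apply/andP; split; apply/forallP=> i; rewrite ffunE.
  by rewrite imset_eq0 chain_ne.
apply/forallP=> j; apply/implyP=> hij; rewrite ffunE.
by apply: imsetS; apply: chain_mono.
Qed.

Definition chain_img {n p k} (t : dmap n p) (c : chain n k) : chain p k :=
  exist (@chainb p k) _ (chain_img_proof t c).

Lemma chain_img_pre {n p k m} (t : dmap n p) (c : chain n k) (s : dmap m k) :
  chain_img t (chain_pre c s) = chain_pre (chain_img t c) s.
Proof. by apply: val_inj; apply/ffunP=> i; rewrite /= !ffunE. Qed.

Record exs (X : psset) (n : nat) := Exs {
  exf : forall k, chain n k -> X k;
  exnat : forall m k (s : dmap m k) (c : chain n k),
      exf m (chain_pre c s) = sact s (exf k c) }.
Arguments exf {X n} e {k} c : rename.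
Arguments exnat {X n} e {m k} s c : rename.
Arguments Exs {X n} exf exnat.

Lemma ex_act_proof {X : psset} {m n} (t : dmap m n) (x : exs X n) m' k
  (s : dmap m' k) (c : chain m k) :
  exf x (chain_img t (chain_pre c s)) = sact s (exf x (chain_img t c)).
Proof. by rewrite chain_img_pre exnat. Qed.

Definition Ex (X : psset) : psset :=
  PSSet (exs X) (fun m n t x => Exs (fun k c => exf x (chain_img t c)) (ex_act_proof t x)).

Lemma exs_eq {X : psset} {n} (x y : exs X n) :
  (forall k (c : chain n k), exf x c = exf y c) -> x = y.
Proof.
case: x => fx hx; case: y => fy hy /= h.
have e : fx = fy.
  by apply: functional_extensionality_dep => k; apply: functional_extensionality.
subst fy; by rewrite (proof_irrelevance _ hx hy).
Qed.

Lemma exf_proof {X Y : psset} (f : shom X Y) {n} (x : exs X n) m k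
  (s : dmap m k) (c : chain n k) :
  f m (exf x (chain_pre c s)) = sact s (f k (exf x c)).
Proof. by rewrite exnat shnat. Qed.

Lemma exf_nat {X Y : psset} (f : shom X Y) m n (t : dmap m n) (x : Ex X n) :
  (Exs (fun k c => f k (exf (sact t x : Ex X m) c)) (exf_proof f (sact t x)) : Ex Y m) = sact t (Exs (fun k c => f k (exf x c)) (exf_proof f x) : Ex Y n).
Proof. by apply: exs_eq. Qed.

Definition Exf {X Y : psset} (f : shom X Y) : shom (Ex X) (Ex Y) :=
  @SHom (Ex X) (Ex Y) (fun n x => Exs (fun k c => f k (exf x c)) (exf_proof f x)) (exf_nat f).

Definition th_weq {K L : cpx} (f : cmap K L) : Prop :=
  weak_homotopy_equivalence (Singf f).

Definition th_fib {K L : cpx} (f : cmap K L) : Prop :=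
  kan_fibration (Exf (Exf (Singf f))).

Definition th_trivfib {K L : cpx} (f : cmap K L) : Prop :=
  th_weq f /\ th_fib f.

Definition th_cof {A B : cpx} (i : cmap A B) : Prop :=
  forall (X Y : cpx) (p : cmap X Y), th_trivfib p ->
  forall (u : cmap A X) (v : cmap B Y), (forall a, p (u a) = v (i a)) ->
  exists l : cmap B X, (forall a, l (i a) = u a) /\ (forall b, p (l b) = v b).

Definition empty_cpx : cpx.
Proof.
refine (@Cpx void (fun _ => False) _ _ _ _).
- by [].
- by [].
- by case.
- by [].
Defined.

Definition from_empty (K : cpx) : cmap empty_cpx K.
Proof. refine (@CMap empty_cpx K (fun v : void => match v with end) _); by []. Defined.

Definition th_cofibrant (K : cpx) : Prop := th_cof (from_empty K).

Definition is_refl_graph (K : cpx) : Prop :=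
  forall S, csimp K S -> forall u v w, S u -> S v -> S w -> u = v \/ u = w \/ v = w.

Definition adj {K : cpx} (u v : cvert K) : Prop :=
  u <> v /\ csimp K (fun w => w = u \/ w = v).

Definition acyclic (K : cpx) : Prop :=
  forall n (c : 'I_n -> cvert K), 3 <= n -> injective c ->
    ~ (forall i, adj (c i) (c (ordS i))).

Definition connected (K : cpx) : Prop :=
  inhabited (cvert K) /\ forall u v, clos_refl_trans _ (@adj K) u v.

Definition is_tree (K : cpx) : Prop := is_refl_graph K /\ connected K /\ acyclic K.

Definition is_forest (K : cpx) : Prop := is_refl_graph K /\ acyclic K.

(* A trivial fibration p : X -> Y in the Thomason model structure is surjective on
   vertices and lifts edges starting at any prescribed vertex.  Since Sing p is a weak
   equivalence, maps into the discrete Kan complex of propositions show that p meets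
   every component of Y; since Ex^2 Sing p is a Kan fibration, lifting the horn
   Lambda^1_0 -> Delta^1, sent to an edge of Y through sd^2 Delta^1, lifts edges.

   A map out of a reflexive forest T is a vertex function preserving edges.  To lift
   v : T -> Y along p extending a given lift on a base set A of vertices (one vertex
   per component, or the image of the smaller tree), lift every other vertex along
   the edge to its parent, a neighbour one step closer to A.  Acyclicity of T makes
   each edge that leaves A join a vertex to its parent, so the result is a map. *)

From mathcomp Require Import all_boot zify.
From Stdlib Require Import Relation_Operators ProofIrrelevance FunctionalExtensionality
  PropExtensionality ClassicalEpsilon Classical.

Set Implicit Arguments.
Unset Strict Implicit.
Unset Printing Implicit Defensive.

Lemma dmap_eq m n (s t : dmap m n) : dfun s =1 dfun t -> s = t.
Proof. by move=> h; apply: val_inj; apply/ffunP. Qed.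

Lemma dmap0_eq n (s t : dmap 0 n) : dfun s ord0 = dfun t ord0 -> s = t.
Proof. by move=> h; apply: dmap_eq => i; rewrite ord1. Qed.

Lemma dfun_did n i : dfun (did n) i = i.
Proof. by rewrite /dfun /= ffunE. Qed.

Lemma dfun_dconst m n (j : 'I_n.+1) i : dfun (dconst m j) i = j.
Proof. by rewrite /dfun /= ffunE. Qed.

Lemma dfun_dcomp m n p (s : dmap n p) (t : dmap m n) i :
  dfun (dcomp s t) i = dfun s (dfun t i).
Proof. by rewrite /dfun /= ffunE. Qed.

Lemma shom_eq (X Y : psset) (f g : shom X Y) : (forall n x, f n x = g n x) -> f = g.
Proof.
case: f => f hf; case: g => g hg /= h.
have e : f = g by apply: functional_extensionality_dep => n; apply: functional_extensionality.
by subst g; rewrite (proof_irrelevance _ hf hg).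
Qed.

Lemma sing_eq (K : cpx) n (s1 s2 : Sing K n) : sval s1 =1 sval s2 -> s1 = s2.
Proof. by move=> h; apply: sigP_eq; apply: functional_extensionality. Qed.

Lemma sing_sset (K : cpx) : is_sset (Sing K).
Proof.
split=> [n s | m n p t s x]; apply: sing_eq => i /=; first by rewrite dfun_did.
by rewrite dfun_dcomp.
Qed.

Definition sing_const (K : cpx) n (x : cvert K) : Sing K n.
Proof.
exists (fun _ => x); apply: (csimp_sub (csimp_single K x)); first by move=> v [_ <-].
by exists x, ord0.
Defined.

(** * Discrete simplicial sets *)

Definition discrete (V : Type) : psset := PSSet (fun _ => V) (fun _ _ _ x => x).

Lemma discrete_sset V : is_sset (discrete V).
Proof. by []. Qed.

Section MapsToDiscrete.

Variables (X : psset) (V : Type) (f : shom X (discrete V)).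

Lemma discrete_shom_vertex m (x : X m) : f m x = f 0 (sact (dconst 0 ord0) x).
Proof. by rewrite (shnat f). Qed.

Lemma discrete_shom_edge (e : X 1) :
  f 0 (sact (dconst 0 ord0) e) = f 0 (sact (dconst 0 ord_max) e).
Proof. by rewrite !(shnat f). Qed.

End MapsToDiscrete.

Lemma dedge_mono n (j k : 'I_n.+1) :
  j <= k -> dmono [ffun l : 'I_2 => if l == ord0 then j else k].
Proof.
move=> jk; apply/forallP => -[[|[|l]] hl]; apply/forallP => -[[|[|l']] hl'] //;
  rewrite !ffunE //=.
Qed.

Definition dedge n (j k : 'I_n.+1) (jk : j <= k) : dmap 1 n :=
  exist (@dmono 1 n) _ (dedge_mono jk).

(* The edge spanned by [h1] and [h2] misses [i], hence lies in the horn. *)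
Lemma horn_vertices_discrete V n (k : 'I_n.+2) (a : shom (Horn k) (discrete V))
    (h1 h2 : Horn k 0) i :
  i != k -> i != dfun (sval h1) ord0 -> i != dfun (sval h2) ord0 -> a 0 h1 = a 0 h2.
Proof.
wlog le12 : h1 h2 / dfun (sval h1) ord0 <= dfun (sval h2) ord0.
  move=> H ik i1 i2; case: (leqP (dfun (sval h1) ord0) (dfun (sval h2) ord0)) => le.
    exact: H.
  by symmetry; apply: H => //; apply: ltnW.
move=> ik i1 i2.
have inh : inhornb k (dedge le12).
  apply/existsP; exists i; rewrite ik /=; apply/codomP => -[l].
  by rewrite /dfun /= ffunE; case: (l == ord0); apply/eqP.
pose e : Horn k 1 := exist (@inhornb 1 n.+1 k) _ inh.
have -> : h1 = sact (dconst 0 ord0) e.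
  by apply: sigP_eq; apply: dmap0_eq; rewrite dfun_dcomp dfun_dconst /dfun /= ffunE.
have -> : h2 = sact (dconst 0 ord_max) e.
  by apply: sigP_eq; apply: dmap0_eq; rewrite dfun_dcomp dfun_dconst /dfun /= ffunE.
exact: discrete_shom_edge.
Qed.

Lemma discrete_kan V : kan_complex (discrete V).
Proof.
move=> n k a.
have [i ik] : exists i : 'I_n.+2, i != k.
  exists (if k == ord0 then ord_max else ord0).
  by case: (k =P ord0) => [->|/eqP]; rewrite 1?eq_sym.
have hk : inhornb k (dconst 0 k).
  apply/existsP; exists i; rewrite ik /=; apply/codomP => -[j].
  by rewrite dfun_dconst; apply/eqP.
pose vk : Horn k 0 := exist (@inhornb 0 n.+1 k) _ hk.
suff vertex_k : forall h : Horn k 0, a 0 h = a 0 vk.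
  exists (@SHom (Delta n.+1) (discrete V) (fun _ _ => a 0 vk) (fun _ _ _ _ => erefl)).
  move=> m h /=.
  by rewrite [RHS](discrete_shom_vertex a) vertex_k.
move=> [s hs]; case: (dfun s ord0 =P k) => [sk | /eqP sk].
  by congr (a 0 _); apply: sigP_eq; apply: dmap0_eq; rewrite dfun_dconst.
have /existsP [i' /andP [i'k ni']] := hs.
apply: (horn_vertices_discrete a (i := i')) => //=; last by rewrite dfun_dconst.
by apply: contra ni' => /eqP ->; apply: codom_f.
Qed.

Lemma shomotopy_discrete_vertex (X : psset) V (g h : shom X (discrete V)) (x : X 0) :
  is_sset X -> shomotopy g h -> g 0 x = h 0 x.
Proof.
move=> [X_id X_comp] [H [Hg Hh]].
pose e : prod1 X 1 := (sact (dconst 1 ord0) x, did 1).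
have face j : sact (dconst 0 j) e = (x, dconst 0 j).
  congr pair; last by apply: dmap_eq => i; rewrite dfun_dcomp dfun_did.
  rewrite -X_comp -[RHS]X_id; congr sact.
  by apply: dmap0_eq; rewrite dfun_dcomp !dfun_dconst dfun_did.
by rewrite -Hg -Hh -(face ord0) -(face ord_max) !(shnat H).
Qed.

Lemma shomotopic_discrete_vertex (X : psset) V (g h : shom X (discrete V)) (x : X 0) :
  is_sset X -> shomotopic g h -> g 0 x = h 0 x.
Proof.
move=> hX; elim=> [? ? /(shomotopy_discrete_vertex x hX) | | ? ? _ | ? ? ? _ -> _] //.
Qed.

Definition cedge (K : cpx) (u w : cvert K) : Prop := csimp K (fun z => z = u \/ z = w).

Definition linked (K : cpx) : cvert K -> cvert K -> Prop := clos_refl_trans _ (@adj K).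

Lemma cedge_sym (K : cpx) (u w : cvert K) : cedge u w -> cedge w u.
Proof.
move=> h; apply: (csimp_sub h); last by exists w; left.
by move=> z [|]; [right|left].
Qed.

Lemma adj_sym (K : cpx) (u w : cvert K) : adj u w -> adj w u.
Proof. by move=> [nuw e]; split; [move=> ewu; apply: nuw | apply: cedge_sym]. Qed.

Lemma adj_neq (K : cpx) (u w : cvert K) : adj u w -> u <> w.
Proof. by case. Qed.

Lemma cmap_cedge (K L : cpx) (f : cmap K L) (u w : cvert K) : cedge u w -> cedge (f u) (f w).
Proof.
move=> h; apply: (csimp_sub (cmap_simp f h)); last by exists (f u); left.
by move=> z [->|->]; [exists u; split=> //; left | exists w; split=> //; right].
Qed.

Lemma linked_sym (K : cpx) (u w : cvert K) : linked u w -> linked w u.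
Proof.
elim=> [? ? /adj_sym | ? | ? ? ? _ h1 _ h2];
  [exact: rt_step | exact: rt_refl | exact: rt_trans h2 h1].
Qed.

Lemma linked_trans (K : cpx) (u v w : cvert K) : linked u v -> linked v w -> linked u w.
Proof. exact: rt_trans. Qed.

Lemma simplex_linked (K : cpx) S (u w : cvert K) : csimp K S -> S u -> S w -> linked u w.
Proof.
move=> hS su sw; case: (classic (u = w)) => [-> | nuw]; first exact: rt_refl.
apply: rt_step; split=> //; apply: (csimp_sub hS); first by move=> z [->|->].
by exists u; left.
Qed.

(** * Weak equivalences are surjective on components *)

Lemma sing_linked_nat (K : cpx) y m n (t : dmap m n) (s : Sing K n) :
  linked (sval (sact t s : Sing K m) ord0) y = linked (sval s ord0) y.
Proof.
have st : linked (sval s (dfun t ord0)) (sval s ord0).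
  by apply: simplex_linked (svalP s) _ _; eexists.
apply: propositional_extensionality; split=> h.
  exact: linked_trans (linked_sym st) h.
exact: linked_trans st h.
Qed.

(* If no vertex of X maps into the component of [y], the indicator of that component
   and the empty predicate agree on Sing X, so they are homotopic maps into a discrete
   Kan complex, hence equal at [y]. *)
Lemma th_weq_linked_surj (X Y : cpx) (p : cmap X Y) :
  th_weq p -> forall y, exists x, linked (p x) y.
Proof.
move=> hw y; apply: NNPP => none.
pose in_comp := @SHom (Sing Y) (discrete Prop) (fun n s => linked (sval s ord0) y)
  (sing_linked_nat y).
pose empty := @SHom (Sing Y) (discrete Prop) (fun _ _ => False) (fun _ _ _ _ => erefl).
have same : scomp in_comp (Singf p) = scomp empty (Singf p).
  apply: shom_eq => n s; apply: propositional_extensionality; split=> //= h.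
  by apply: none; exists (sval s ord0).
have [_ inj] := hw _ (@discrete_sset Prop) (@discrete_kan Prop).
have htpy : shomotopic in_comp empty by apply: inj; rewrite same; apply: rst_refl.
have /= <- := shomotopic_discrete_vertex (sing_const 0 y) (sing_sset Y) htpy.
exact: rt_refl.
Qed.

(** * Fibrations lift edges *)

Lemma ex2_eq (K : cpx) n (E1 E2 : Ex (Ex (Sing K)) n) :
  (forall k (c : chain n k) k' (d : chain k k'),
     sval (exf (exf E1 c) d) =1 sval (exf (exf E2 c) d)) -> E1 = E2.
Proof. by move=> h; apply: exs_eq => k c; apply: exs_eq => k' d; apply: sing_eq. Qed.

Definition ex_const (K : cpx) n (x : cvert K) : Ex (Sing K) n :=
  @Exs (Sing K) n (fun k _ => sing_const k x) (fun _ _ _ _ => ltac:(by apply: sing_eq)).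

Definition ex2_const (K : cpx) n (x : cvert K) : Ex (Ex (Sing K)) n :=
  @Exs (Ex (Sing K)) n (fun k _ => ex_const k x)
    (fun _ _ _ _ => ltac:(by apply: exs_eq => ? ?; apply: sing_eq)).

Definition ex2_const_shom (Z : psset) (K : cpx) (x : cvert K) : shom Z (Ex (Ex (Sing K))) :=
  @SHom Z (Ex (Ex (Sing K))) (fun m _ => ex2_const m x) (fun _ _ _ _ => ltac:(by apply: ex2_eq)).

(* Vertex [i] of the chain of chains [d] over [c] in sd^2 Delta^m lies over the
   vertex 0 of Delta^1 under [t]. *)
Definition sd2_over0 m k k' (t : dmap m 1) (c : chain m k) (d : chain k k') (i : 'I_k'.+1) :=
  [forall (j | j \in sval d i), forall (l | l \in sval c j), dfun t l == ord0].

Lemma sd2_over0_pre_d m k k' k'' (t : dmap m 1) (c : chain m k) (d : chain k k')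
    (s : dmap k'' k') i :
  sd2_over0 t c (chain_pre d s) i = sd2_over0 t c d (dfun s i).
Proof. by rewrite /sd2_over0 /= ffunE. Qed.

Lemma sd2_over0_pre_c m k k1 k' (t : dmap m 1) (c : chain m k) (s : dmap k1 k)
    (d : chain k1 k') i :
  sd2_over0 t (chain_pre c s) d i = sd2_over0 t c (chain_img s d) i.
Proof.
rewrite /sd2_over0 /=; apply/forall_inP/forall_inP => H j.
  by rewrite ffunE => /imsetP [j0 hj0 ->]; have := H j0 hj0; rewrite ffunE.
by move=> hj; rewrite ffunE; apply: H; rewrite ffunE; apply: imset_f.
Qed.

Lemma sd2_over0_img_c m m0 k k' (t : dmap m 1) (s : dmap m0 m) (c : chain m0 k)
    (d : chain k k') i :
  sd2_over0 (dcomp t s) c d i = sd2_over0 t (chain_img s c) d i.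
Proof.
rewrite /sd2_over0 /=; apply/forall_inP/forall_inP => H j /H /forall_inP {}H;
  apply/forall_inP => l.
  by rewrite ffunE => /imsetP [l0 /H hl0 ->]; rewrite -dfun_dcomp.
by move=> hl; rewrite dfun_dcomp; apply: H; rewrite ffunE; apply: imset_f.
Qed.

Section Sd2Edge.

Variables (Y : cpx) (y y' : cvert Y) (yy' : cedge y y').

Definition sd2_edge_sing m k k' (t : dmap m 1) (c : chain m k) (d : chain k k') : Sing Y k'.
Proof.
exists (fun i => if sd2_over0 t c d i then y else y'); apply: (csimp_sub yy').
  by move=> w [i <-]; case: ifP; [left|right].
by exists (if sd2_over0 t c d ord0 then y else y'), ord0.
Defined.

Definition sd2_edge_ex m k (t : dmap m 1) (c : chain m k) : Ex (Sing Y) k :=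
  @Exs (Sing Y) k (fun k' d => sd2_edge_sing t c d)
    (fun _ _ _ _ => ltac:(by apply: sing_eq => i /=; rewrite sd2_over0_pre_d)).

Definition sd2_edge_ex2 m (t : dmap m 1) : Ex (Ex (Sing Y)) m :=
  @Exs (Ex (Sing Y)) m (fun k c => sd2_edge_ex t c)
    (fun _ _ _ _ => ltac:(by apply: exs_eq => ? ?; apply: sing_eq => i /=;
                             rewrite sd2_over0_pre_c)).

(* The map sd^2 Delta^1 -> Y sending the vertices over 0 to [y] and the others to [y']. *)
Definition sd2_edge : shom (Delta 1) (Ex (Ex (Sing Y))) :=
  @SHom (Delta 1) (Ex (Ex (Sing Y))) (fun m t => sd2_edge_ex2 t)
    (fun _ _ _ _ => ltac:(by apply: ex2_eq => ? ? ? ? i /=; rewrite sd2_over0_img_c)).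

End Sd2Edge.

Lemma chain01_proof : chainb [ffun j : 'I_2 => if j == ord0 then [set ord0] else [set: 'I_2]].
Proof.
apply/andP; split; apply/forallP.
  by move=> j; rewrite ffunE; case: ifP => _; apply/set0Pn; exists ord0; rewrite ?inE.
by move=> -[[|[|j]] hj]; apply/forallP => -[[|[|j']] hj'] //; rewrite !ffunE //= subsetT.
Qed.

Definition chain01 : chain 1 1 := exist (@chainb 1 1) _ chain01_proof.

Lemma chain0_proof : chainb [ffun j : 'I_1 => [set ord0 : 'I_1]].
Proof.
apply/andP; split; apply/forallP => j; rewrite ?ffunE.
  by apply/set0Pn; exists ord0; rewrite inE.
by apply/forallP => j'; rewrite !ffunE subxx implybT.
Qed.

Definition chain0 : chain 0 0 := exist (@chainb 0 0) _ chain0_proof.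

Lemma chain01_vertex0 : chain_pre chain01 (dconst 0 ord0) = chain_img (dconst 0 ord0) chain0.
Proof.
by apply: val_inj; apply/ffunP => i; rewrite /= !ffunE dfun_dconst /= imset_set1 dfun_dconst.
Qed.

(* The edge of [K] obtained by evaluating a 1-simplex of Ex^2 Sing K on the top
   simplex of sd^2 Delta^1. *)
Definition ex2_edge (K : cpx) (E : Ex (Ex (Sing K)) 1) : Sing K 1 :=
  exf (exf E chain01) chain01.

Lemma ex2_edge_vertex0 (K : cpx) (E : Ex (Ex (Sing K)) 1) :
  sval (ex2_edge E) ord0 =
  sval (exf (exf (sact (dconst 0 ord0) E : Ex (Ex (Sing K)) 0) chain0) chain0) ord0.
Proof.
pose s0 : dmap 0 1 := dconst 0 ord0.
transitivity (sval (sact s0 (ex2_edge E) : Sing K 0) ord0); first by rewrite /= dfun_dconst.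
rewrite /ex2_edge -(exnat (exf E chain01) s0 chain01) chain01_vertex0.
change (sval (exf (sact s0 (exf E chain01) : Ex (Sing K) 0) chain0) ord0 =
        sval (exf (exf (sact s0 E : Ex (Ex (Sing K)) 0) chain0) chain0) ord0).
by rewrite -(exnat E s0 chain01) chain01_vertex0.
Qed.

Definition edge_lifting (X Y : cpx) (p : cmap X Y) : Prop :=
  forall x y', cedge (p x) y' -> exists x', p x' = y' /\ cedge x x'.

Lemma horn1_0_const m (h : Horn (ord0 : 'I_2) m) l : dfun (sval h) l = ord0.
Proof.
case: h => t /existsP [i /andP [i0 ni]] /=.
have : dfun t l != i by apply: contra ni => /eqP <-; apply: codom_f.
by move: i0 {ni}; case: (dfun t l) => [[|[|a]] ?] //; case: i => [[|[|b]] ?] // _ _;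
  apply: val_inj.
Qed.

Lemma sd2_edge_horn (X Y : cpx) (p : cmap X Y) x y' (e : cedge (p x) y') m
    (h : Horn (ord0 : 'I_2) m) :
  Exf (Exf (Singf p)) m (ex2_const_shom _ x m h) = sd2_edge e m (sval h).
Proof.
apply: ex2_eq => k c k' d i /=.
suff -> : sd2_over0 (sval h) c d i by [].
by apply/forall_inP => j _; apply/forall_inP => l _; rewrite horn1_0_const.
Qed.

Lemma sd2_over0_top : sd2_over0 (did 1) chain01 chain01 ord_max = false.
Proof.
apply/negbTE/forall_inP => /(_ ord_max); rewrite /= ffunE inE => /(_ isT).
by move/forall_inP => /(_ ord_max); rewrite inE dfun_did => /(_ isT).
Qed.

Lemma horn1_0_vertex0 : inhornb (ord0 : 'I_2) (dconst 0 ord0).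
Proof. by apply/existsP; exists ord_max; apply/codomP => -[j]; rewrite dfun_dconst. Qed.

(* Lift the horn Lambda^1_0 -> Delta^1 against Ex^2 Sing p, where Delta^1 is sent
   to the edge (p x, y') through sd^2. *)
Lemma th_fib_edge_lifting (X Y : cpx) (p : cmap X Y) : th_fib p -> edge_lifting p.
Proof.
move=> hf x y' e.
have [l [l_horn l_p]] := hf 0 ord0 (ex2_const_shom _ x) (sd2_edge e) (sd2_edge_horn e).
pose s := ex2_edge (l 1 (did 1)).
exists (sval s ord_max); split.
  have := congr1 (fun E => sval (ex2_edge E) ord_max) (l_p 1 (did 1)).
  by rewrite /= sd2_over0_top.
have s0 : sval s ord0 = x.
  rewrite ex2_edge_vertex0 -(shnat l) /=.
  have -> : dcomp (did 1) (dconst 0 ord0) =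
            sval (exist (@inhornb 0 1 ord0) _ horn1_0_vertex0 : Horn ord0 0).
    by apply: dmap0_eq; rewrite dfun_dcomp !dfun_dconst dfun_did.
  by rewrite l_horn.
apply: (csimp_sub (svalP s)); last by exists x; left.
by move=> w [->|->]; [exists ord0 | exists ord_max].
Qed.

Lemma edge_lifting_linked (X Y : cpx) (p : cmap X Y) : edge_lifting p ->
  forall y1 y2, linked y1 y2 -> forall x, p x = y1 -> exists x', p x' = y2.
Proof.
move=> lift y1 y2; elim=> {y1 y2} [y1 y2 [_ e] | y | y1 y2 y3 _ IH1 _ IH2] x px.
- by have [x' [px' _]] := lift x y2 ltac:(by rewrite px); exists x'.
- by exists x.
- by have [x' /IH2] := IH1 x px.
Qed.

Lemma th_trivfib_surj (X Y : cpx) (p : cmap X Y) : th_trivfib p -> forall y, exists x, p x = y.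
Proof.
move=> [hw hf] y; have [x hx] := th_weq_linked_surj hw y.
exact: (edge_lifting_linked (th_fib_edge_lifting hf) hx (x := x) erefl).
Qed.

(** * Walks in reflexive graphs *)

Definition wcat (V : Type) n (g h : nat -> V) k := if k <= n then g k else h (k - n).

Definition wrev (V : Type) n (g : nat -> V) k := g (n - k).

Lemma wcat_l (V : Type) n (g h : nat -> V) k : k <= n -> wcat n g h k = g k.
Proof. by rewrite /wcat => ->. Qed.

Lemma wcat_r (V : Type) n (g h : nat -> V) k : g n = h 0 -> n <= k -> wcat n g h k = h (k - n).
Proof.
rewrite /wcat => e hk; case: ifP => // hkn.
have -> : k = n by lia.
by rewrite subnn.
Qed.

Lemma classical_ex_min (P : nat -> Prop) :
  (exists n, P n) -> exists n, P n /\ forall m, P m -> n <= m.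
Proof.
move=> [n hn]; apply: NNPP => H; move: n hn.
elim/ltn_ind => n IH hn; apply: H; exists n; split=> // m hm.
by case: (leqP n m) => // lt; case: (IH m lt hm).
Qed.

Section Walks.

Variable T : cpx.
Implicit Types (g h : nat -> cvert T) (u w : cvert T).

Definition walk n g := forall k, k < n -> adj (g k) (g k.+1).

Definition nonbacktracking n g := forall k, k.+2 <= n -> g k <> g k.+2.

Definition joined u w := exists n g, g 0 = u /\ g n = w /\ walk n g.

Lemma walk_cat n m g h : walk n g -> walk m h -> g n = h 0 -> walk (n + m) (wcat n g h).
Proof.
move=> wg wh e k hk; case: (ltnP k n) => hkn.
  by rewrite !wcat_l; try lia; apply: wg.
rewrite !wcat_r //; try lia.
have -> : k.+1 - n = (k - n).+1 by lia.
by apply: wh; lia.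
Qed.

Lemma nonbacktracking_cat n m g h :
  nonbacktracking n g -> nonbacktracking m h -> g n = h 0 ->
  (0 < n -> 0 < m -> g n.-1 <> h 1) -> nonbacktracking (n + m) (wcat n g h).
Proof.
move=> ng nh e junction k hk.
case: (leqP k.+2 n) => h1.
  by rewrite !wcat_l; try lia; apply: ng.
case: (leqP n k) => h2.
  rewrite !wcat_r //; try lia.
  have -> : k.+2 - n = (k - n).+2 by lia.
  by apply: nh; lia.
have ek : k = n.-1 by lia.
rewrite wcat_l ?wcat_r //; try lia.
have -> : k.+2 - n = 1 by lia.
by rewrite ek; apply: junction; lia.
Qed.

Lemma walk_rev n g : walk n g -> walk n (wrev n g).
Proof.
move=> wg k hk; rewrite /wrev; apply: adj_sym.
have -> : n - k = (n - k.+1).+1 by lia.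
by apply: wg; lia.
Qed.

Lemma nonbacktracking_rev n g : nonbacktracking n g -> nonbacktracking n (wrev n g).
Proof.
move=> ng k hk; rewrite /wrev => e.
apply: (ng (n - k.+2)); first lia.
by have -> : (n - k.+2).+2 = n - k by lia.
Qed.

Lemma walk_linked n g : walk n g -> linked (g 0) (g n).
Proof.
elim: n => [|n IH] wg; first exact: rt_refl.
by apply: rt_trans (IH _) (rt_step _ _ _ _ (wg n _)) => // k hk; apply: wg; lia.
Qed.

Lemma linked_joined u w : linked u w -> joined u w.
Proof.
elim=> {u w} [u w h | u | u w z _ [n [g [g0 [gn wg]]]] _ [m [h [h0 [hm wh]]]]].
- exists 1, (fun k => if k == 0 then u else w); do 2!split=> //.
  by case.
- by exists 0, (fun _ => u); do 2!split=> //; case.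
- exists (n + m), (wcat n g h); split; first by rewrite wcat_l.
  split; first by rewrite wcat_r ?addKn ?leq_addr // gn.
  by apply: walk_cat => //; rewrite gn.
Qed.

(* A shortest walk cannot backtrack. *)
Lemma joined_nonbacktracking u w :
  joined u w -> exists n g, g 0 = u /\ g n = w /\ walk n g /\ nonbacktracking n g.
Proof.
move=> /classical_ex_min [n [[g [g0 [gn wg]]] shortest]].
exists n, g; do 3!split=> //; move=> k hk e.
pose g' t := if t <= k then g t else g t.+2.
suff : n <= n - 2 by lia.
apply: shortest; exists g'; split; first by rewrite /g' leq0n.
split.
  rewrite /g'; case: ifP => hnk; last by have -> : (n - 2).+2 = n by lia.
  have -> : n - 2 = k by lia.
  by rewrite e -gn; congr g; lia.
move=> t ht; rewrite /g'; case: ifP => h1; case: ifP => h2; try (apply: wg; lia).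
  have -> : t = k by lia.
  by rewrite e; apply: wg; lia.
lia.
Qed.

(* A closest repetition g i = g (i + G) with G >= 3 traces a cycle of length G. *)
Lemma acyclic_nonbacktracking_inj n g : acyclic T -> walk n g -> nonbacktracking n g ->
  forall i j, i < j <= n -> g i <> g j.
Proof.
move=> hac wg ng.
suff H : forall G i, i + G <= n -> 0 < G -> g i <> g (i + G).
  move=> i j /andP [hij hjn]; have := H (j - i) i; rewrite subnKC ?(ltnW hij) //.
  by apply; rewrite ?subn_gt0.
elim/ltn_ind => G IH i hiG hG e.
case: G IH hiG hG e => [|[|[|G]]] IH hiG hG e //.
- by apply: (adj_neq (wg i _)); [lia | rewrite addn1 in e].
- by apply: (ng i); [lia | rewrite addn2 in e].
pose c := fun k : 'I_G.+3 => g (i + k).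
apply: (hac G.+3 c) => //.
- move=> k1 k2 /= e12; apply: val_inj; have h1 := ltn_ord k1; have h2 := ltn_ord k2.
  case: (ltngtP k1 k2) => // lt; exfalso.
    apply: (IH (k2 - k1) _ (i + k1)); try lia.
    by rewrite /c in e12; rewrite e12; congr g; lia.
  apply: (IH (k1 - k2) _ (i + k2)); try lia.
  by rewrite /c in e12; rewrite -e12; congr g; lia.
- move=> k; rewrite /c /=; have hk := ltn_ord k.
  case: (ltnP k.+1 G.+3) => hk1.
    by rewrite modn_small //; have := wg (i + k) _; rewrite addnS; apply; lia.
  have ek : nat_of_ord k = G.+2 by lia.
  by rewrite ek modnn addn0 e; have := wg (i + G.+2) _; rewrite -addnS; apply; lia.
Qed.

End Walks.

Lemma walk_map (T1 T2 : cpx) (i : cmap T1 T2) n g : injective (cmf i) -> walk n g ->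
  walk n (fun k => i (g k)).
Proof.
move=> inj wg k hk; have [ne e] := wg k hk; split; last exact: cmap_cedge.
by move=> /inj.
Qed.

Lemma nonbacktracking_map (T1 T2 : cpx) (i : cmap T1 T2) n g : injective (cmf i) ->
  nonbacktracking n g -> nonbacktracking n (fun k => i (g k)).
Proof. by move=> inj ng k hk /inj; apply: ng. Qed.

Lemma refl_graph_simp (T X : cpx) (f : cvert T -> cvert X) : is_refl_graph T ->
  (forall w w', adj w w' -> cedge (f w) (f w')) ->
  forall S, csimp T S -> csimp X (fun z => exists u, S u /\ f u = z).
Proof.
move=> hrg fe S hS; have [w0 Sw0] := csimp_ne _ _ hS.
case: (classic (exists w1, S w1 /\ w1 <> w0)) => [[w1 [Sw1 ne]] | single].
  have a01 : adj w0 w1.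
    split=> [e | ]; first by apply: ne.
    by apply: (csimp_sub hS); [move=> z [->|->] | exists w0; left].
  apply: (csimp_sub (fe _ _ a01)); last by exists (f w0), w0.
  move=> z [u [Su <-]].
  by have [->|[->|e]] := hrg S hS u w0 w1 Su Sw0 Sw1; [left | right | case: ne].
apply: (csimp_sub (csimp_single X (f w0))); last by exists (f w0), w0.
by move=> z [u [Su <-]]; congr f; apply: NNPP => ne; apply: single; exists u.
Qed.

(** * Lifting a forest from a convex base *)

Section LiftFromBase.

Variables (T : cpx) (A : cvert T -> Prop).
Implicit Types (g b : nat -> cvert T) (w : cvert T).

Definition reach w n := exists g, A (g 0) /\ g n = w /\ walk n g.

Hypothesis reach_base : forall w, exists n, reach w n.

Definition dist w : nat :=
  sval (constructive_indefinite_description _ (classical_ex_min (reach_base w))).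

Lemma dist_reach w : reach w (dist w).
Proof.
by have [] := svalP (constructive_indefinite_description _ (classical_ex_min (reach_base w))).
Qed.

Lemma dist_min w n : reach w n -> dist w <= n.
Proof.
have [_] := svalP (constructive_indefinite_description _ (classical_ex_min (reach_base w))).
exact.
Qed.

Lemma dist0 w : dist w = 0 <-> A w.
Proof.
have [g [g0 [gd _]]] := dist_reach w.
split=> [e | Aw]; first by rewrite e in gd; rewrite -gd.
by apply/eqP; rewrite -leqn0; apply: dist_min; exists (fun _ => w); do 2!split=> //; case.
Qed.

Lemma dist_adj w w' : adj w w' -> dist w' <= (dist w).+1.
Proof.
move=> ww'; have [g [g0 [gd wg]]] := dist_reach w.
apply: dist_min; exists (fun k => if k <= dist w then g k else w').
split; first by rewrite leq0n.
split; first by rewrite ltnn.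
move=> k hk /=; case: ifP => h1; case: ifP => h2; try lia.
  by apply: wg; lia.
have -> : k = dist w by lia.
by rewrite gd.
Qed.

Lemma geodesic w : exists g, A (g 0) /\ g (dist w) = w /\ walk (dist w) g /\
  forall k, k <= dist w -> dist (g k) = k.
Proof.
have [g [g0 [gd wg]]] := dist_reach w.
exists g; do 3!split=> //; move=> k hk; apply/eqP; rewrite eqn_leq; apply/andP; split.
  by apply: dist_min; exists g; do 2!split=> //; move=> t ht; apply: wg; lia.
apply: contraT; rewrite -ltnNge => lt.
have [h [h0 [hgk wh]]] := dist_reach (g k).
suff : dist w <= dist (g k) + (dist w - k) by lia.
apply: dist_min; exists (wcat (dist (g k)) h (fun t => g (k + t))).
split; first by rewrite wcat_l.
split.
  rewrite wcat_r ?addn0 ?leq_addr //.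
  by have -> : k + (dist (g k) + (dist w - k) - dist (g k)) = dist w by lia.
apply: walk_cat; rewrite ?addn0 // => t ht; rewrite addnS; apply: wg; lia.
Qed.

Lemma geodesic_nonbacktracking d g : (forall k, k <= d -> dist (g k) = k) -> nonbacktracking d g.
Proof. by move=> dg k hk e; have := congr1 dist e; rewrite !dg; lia. Qed.

Definition parent w : cvert T :=
  epsilon (inhabits w) (fun z => adj z w /\ dist z = (dist w).-1).

Lemma parent_spec w : 0 < dist w -> adj (parent w) w /\ dist (parent w) = (dist w).-1.
Proof.
move=> dw; apply: (epsilon_spec (inhabits w) (fun z => adj z w /\ dist z = (dist w).-1)).
have [g [_ [gd [wg dg]]]] := geodesic w.
exists (g (dist w).-1); split; last by apply: dg; lia.
by rewrite -{2}gd; have := wg (dist w).-1 ltac:(lia); rewrite prednK.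
Qed.

Hypothesis T_acyclic : acyclic T.

Hypothesis base_convex : forall a1 a2, A a1 -> A a2 -> joined a1 a2 ->
  exists q Q, Q 0 = a1 /\ Q q = a2 /\ walk q Q /\ nonbacktracking q Q /\
    forall k, k <= q -> A (Q k).

Lemma base_walk a1 a2 : A a1 -> A a2 -> linked a1 a2 ->
  exists q Q, Q 0 = a1 /\ Q q = a2 /\ walk q Q /\ nonbacktracking q Q /\
    forall k, k <= q -> dist (Q k) = 0.
Proof.
move=> A1 A2 /linked_joined /(base_convex A1 A2) [q [Q [Q0 [Qq [wQ [nQ AQ]]]]]].
by exists q, Q; do 4!split=> //; move=> k /AQ /dist0.
Qed.

(* Closing [b] up with geodesics to the base and a walk inside the base would give
   a cycle. *)
Lemma no_bridge m b d :
  0 < m -> walk m b -> nonbacktracking m b -> dist (b 0) = d -> dist (b m) = d ->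
  (forall k, 0 < k < m -> d < dist (b k)) -> (m = 1 -> 0 < d) -> False.
Proof.
move=> m0 wb nb b0 bm inner m1.
have dist_neq x y : dist x <> dist y -> x <> y by move=> ne e; apply: ne; rewrite e.
have far k : k <= m -> d <= dist (b k).
  move=> km; case: (posnP k) => [-> | k0]; first by rewrite b0.
  case: (ltngtP k m) => [km' | | ->]; [ | lia | by rewrite bm].
  by apply: ltnW; apply: inner; rewrite k0.
have [g1 [g10 [g1d [wg1 dg1]]]] := geodesic (b 0).
have [g2 [g20 [g2d [wg2 dg2]]]] := geodesic (b m).
rewrite b0 in g1d wg1 dg1; rewrite bm in g2d wg2 dg2.
have g21 : linked (g2 0) (g1 0).
  have := walk_linked wg2; have := walk_linked wb; have := walk_linked wg1.
  rewrite g1d g2d => l1 lb l2.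
  exact: linked_trans l2 (linked_trans (linked_sym lb) (linked_sym l1)).
have [q [Q [Q0 [Qq [wQ [nQ AQd]]]]]] := base_walk g20 g10 g21.
pose F1 := wcat q Q g1.
pose F2 := wcat (q + d) F1 b.
pose F := wcat (q + d + m) F2 (wrev d g2).
have F1_end : F1 (q + d) = b 0 by rewrite /F1 wcat_r ?addKn ?leq_addr.
have F2_end : F2 (q + d + m) = wrev d g2 0 by rewrite /F2 wcat_r ?addKn ?leq_addr // /wrev subn0.
have wF : walk (q + d + m + d) F.
  by apply: walk_cat (walk_rev wg2) F2_end; apply: walk_cat wb F1_end; apply: walk_cat.
have nF : nonbacktracking (q + d + m + d) F.
  apply: nonbacktracking_cat (nonbacktracking_rev (geodesic_nonbacktracking dg2)) F2_end _.
    apply: nonbacktracking_cat nb F1_end _.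
      apply: nonbacktracking_cat nQ (geodesic_nonbacktracking dg1) Qq _.
      by move=> q0 d0; apply: dist_neq; rewrite AQd ?dg1; lia.
    move=> qd0 _; apply: dist_neq; case: (posnP d) => [d0 | d0].
      have m1' : 1 < m by case: (ltngtP m 1) => [| // | e]; [lia | move: (m1 e); lia].
      rewrite /F1 d0 addn0 wcat_l ?AQd ?leq_pred //.
      by have := inner 1 ltac:(lia); lia.
    rewrite /F1 wcat_r //; try lia.
    have -> : (q + d).-1 - q = d.-1 by lia.
    by rewrite dg1; have := far 1; lia.
  move=> _ d0; rewrite /F2 wcat_r // /wrev; try lia.
  apply: dist_neq; rewrite dg2; try lia.
  have -> : (q + d + m).-1 - (q + d) = m.-1 by lia.
  by have := far m.-1; lia.
have F0 : F 0 = g2 0 by rewrite /F /F2 /F1 !wcat_l.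
have FL : F (q + d + m + d) = g2 0 by rewrite /F wcat_r ?leq_addr // /wrev addKn subnn.
by apply: (acyclic_nonbacktracking_inj T_acyclic wF nF (i := 0) (j := q + d + m + d));
  [lia | rewrite F0 FL].
Qed.

Lemma adj_dist_neq w w' : adj w w' -> ~ (A w /\ A w') -> dist w <> dist w'.
Proof.
move=> ww' notA e.
pose b (k : nat) := if k == 0 then w else w'.
apply: (@no_bridge 1 b (dist w)) => //; try by move=> [|[|k]].
by move=> _; rewrite lt0n; apply/eqP => d0; apply: notA; rewrite -!dist0 -e.
Qed.

Lemma lower_neighbour_unique w w1 w2 :
  adj w1 w -> adj w2 w -> dist w1 = dist w2 -> dist w = (dist w1).+1 -> w1 = w2.
Proof.
move=> a1 a2 e ew; apply: NNPP => ne.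
pose b (k : nat) := if k == 0 then w1 else if k == 1 then w else w2.
apply: (@no_bridge 2 b (dist w1)) => //.
- by move=> [|[|k]] //= _; exact: adj_sym a2.
- by case.
- by move=> [|[|k]] //= _; rewrite /b /= ew.
Qed.

Variables (X Y : cpx) (p : cmap X Y) (v : cmap T Y) (f0 : cvert T -> cvert X).

Hypothesis p_lift : edge_lifting p.
Hypothesis f0_over : forall a, A a -> p (f0 a) = v a.
Hypothesis f0_edge : forall a a', A a -> A a' -> adj a a' -> cedge (f0 a) (f0 a').

Definition lift_step (x : cvert X) (y' : cvert Y) : cvert X :=
  epsilon (inhabits x) (fun x' => p x' = y' /\ cedge x x').

Fixpoint lift_rec n w : cvert X :=
  if n is n'.+1 then lift_step (lift_rec n' (parent w)) (v w) else f0 w.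

Definition lift_vert w := lift_rec (dist w) w.

Lemma lift_rec_spec n w : dist w = n ->
  p (lift_rec n w) = v w /\ (0 < n -> cedge (lift_rec n.-1 (parent w)) (lift_rec n w)).
Proof.
elim: n w => [|n IH] w dw /=; first by split=> //; apply/f0_over/dist0.
have [pw dpw] := parent_spec (w := w) ltac:(lia).
have [IH1 _] := IH (parent w) ltac:(lia).
have [x' [px' e]] : exists x', p x' = v w /\ cedge (lift_rec n (parent w)) x'.
  by apply: p_lift; rewrite IH1; apply: cmap_cedge; case: pw.
have [] := epsilon_spec (inhabits (lift_rec n (parent w)))
  (fun x'' => p x'' = v w /\ cedge (lift_rec n (parent w)) x'') (ex_intro _ x' (conj px' e)).
by split.
Qed.

Lemma lift_vert_over w : p (lift_vert w) = v w.
Proof. by have [] := lift_rec_spec (erefl (dist w)). Qed.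

Lemma lift_vert_parent w : 0 < dist w -> cedge (lift_vert (parent w)) (lift_vert w).
Proof.
move=> dw; have [_ ] := lift_rec_spec (erefl (dist w)).
by rewrite /lift_vert (parent_spec dw).2; apply.
Qed.

Lemma lift_vert_base a : A a -> lift_vert a = f0 a.
Proof. by move=> Aa; rewrite /lift_vert (proj2 (dist0 a) Aa). Qed.

(* An edge leaving the base joins a vertex to its parent. *)
Lemma lift_vert_edge w w' : adj w w' -> cedge (lift_vert w) (lift_vert w').
Proof.
move=> ww'; case: (classic (A w /\ A w')) => [[Aw Aw'] | notA].
  by rewrite !lift_vert_base //; apply: f0_edge.
have ne := adj_dist_neq ww' notA.
wlog lt : w w' ww' notA ne / dist w < dist w'.
  move=> H; case: (ltngtP (dist w) (dist w')) => lt; [exact: H | | by []].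
  apply: cedge_sym; apply: H; [exact: adj_sym | tauto | lia | done].
have le := dist_adj ww'.
have [pw' dpw'] := parent_spec (w := w') ltac:(lia).
have -> : w = parent w' by apply: lower_neighbour_unique ww' pw' _ _; lia.
by apply: lift_vert_parent; lia.
Qed.

Hypothesis T_refl_graph : is_refl_graph T.

Lemma forest_lift : exists l : cmap T X, (forall a, A a -> l a = f0 a) /\ forall w, p (l w) = v w.
Proof.
exists (@CMap T X lift_vert (refl_graph_simp T_refl_graph lift_vert_edge)).
by split; [exact: lift_vert_base | exact: lift_vert_over].
Qed.

End LiftFromBase.

(** * Forests and tree inclusions *)

Definition comp_rep (T : cpx) (w : cvert T) : cvert T := epsilon (inhabits w) (linked w).

Lemma linked_comp_rep (T : cpx) (w : cvert T) : linked w (comp_rep w).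
Proof. by apply: (epsilon_spec (inhabits w) (linked w)); exists w; apply: rt_refl. Qed.

Lemma comp_rep_eq (T : cpx) (w w' : cvert T) : linked w w' -> comp_rep w = comp_rep w'.
Proof.
move=> ww'; rewrite /comp_rep.
have -> : linked w = linked w'.
  apply: functional_extensionality => z; apply: propositional_extensionality.
  by split; [apply: linked_trans (linked_sym ww') | apply: linked_trans ww'].
by rewrite (proof_irrelevance _ (inhabits w) (inhabits w')).
Qed.

Lemma forest_cofibrant (T : cpx) : is_forest T -> th_cofibrant T.
Proof.
move=> [T_rg T_ac] X Y p trivfib u v _.
have surj := th_trivfib_surj trivfib.
pose f0 w := sval (constructive_indefinite_description _ (surj (v w))).
pose A (w : cvert T) := comp_rep w = w.
have A_linked a a' : A a -> A a' -> linked a a' -> a = a'.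
  by move=> Aa Aa' aa'; rewrite -Aa -Aa'; apply: comp_rep_eq.
have reach_A w : exists n, reach A w n.
  have [n [g [g0 [gn wg]]]] := linked_joined (linked_sym (linked_comp_rep w)).
  exists n, g; split=> //; rewrite g0 /A; apply/comp_rep_eq/linked_sym/linked_comp_rep.
have A_convex a1 a2 : A a1 -> A a2 -> joined a1 a2 -> exists q Q, Q 0 = a1 /\ Q q = a2 /\
    walk q Q /\ nonbacktracking q Q /\ forall k, k <= q -> A (Q k).
  move=> A1 A2 [n [g [g0 [gn /walk_linked]]]]; rewrite g0 gn => /(A_linked _ _ A1 A2) <-.
  by exists 0, (fun _ => a1); do 4!split=> //; case.
have f0_over w : A w -> p (f0 w) = v w.
  by move=> _; exact: (svalP (constructive_indefinite_description _ (surj (v w)))).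
have f0_edge a a' : A a -> A a' -> adj a a' -> cedge (f0 a) (f0 a').
  by move=> Aa Aa' aa'; case: (adj_neq aa'); apply: A_linked => //; apply: rt_step.
have [l [_ lp]] :=
  forest_lift reach_A T_ac A_convex (th_fib_edge_lifting trivfib.2) f0_over f0_edge T_rg.
by exists l; split=> // -[].
Qed.

(* A longer path from [b] to [b'] together with the edge (i b', i b) would close a cycle. *)
Lemma tree_cmap_adj (T1 T2 : cpx) (i : cmap T1 T2) b b' :
  is_tree T1 -> acyclic T2 -> injective (cmf i) -> adj (i b) (i b') -> adj b b'.
Proof.
move=> [_ [[_ conn1] ac1]] ac2 inj ibb'.
have [n [g [g0 [gn [wg ng]]]]] := joined_nonbacktracking (linked_joined (conn1 b b')).
case: n g0 gn wg ng => [|[|n]] g0 gn wg ng.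
- by case: (adj_neq ibb'); rewrite -g0 -gn.
- by rewrite -g0 -gn; apply: wg.
exfalso; pose back (k : nat) := if k == 0 then i b' else i b.
pose F := wcat n.+2 (fun k => i (g k)) back.
have junction : i (g n.+2) = back 0 by rewrite gn.
have wF : walk (n.+2 + 1) F.
  by apply: walk_cat (walk_map inj wg) _ junction => -[|k] //= _; apply: adj_sym.
have nF : nonbacktracking (n.+2 + 1) F.
  apply: nonbacktracking_cat (nonbacktracking_map inj ng) _ junction _; first by case.
  move=> _ _ /inj e; apply: (acyclic_nonbacktracking_inj ac1 wg ng (i := 0) (j := n.+1)).
    lia.
  by rewrite e g0.
apply: (acyclic_nonbacktracking_inj ac2 wF nF (i := 0) (j := n.+2 + 1)); first lia.
rewrite /F wcat_l // wcat_r //; last lia.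
by rewrite addKn /= g0.
Qed.

Lemma tree_inclusion_cofibration (T1 T2 : cpx) (i : cmap T1 T2) :
  is_tree T1 -> is_tree T2 -> injective (cmf i) -> th_cof i.
Proof.
move=> tree1 [T2_rg [[_ conn2] T2_ac]] inj X Y p trivfib u v uv.
have [_ [[[a0] conn1] _]] := tree1.
pose inv w := epsilon (inhabits a0) (fun a => i a = w).
have invK a : inv (i a) = a.
  by apply: inj; apply: (epsilon_spec (inhabits a0) (fun a' => i a' = i a)); exists a.
pose A (w : cvert T2) := exists a, i a = w.
have reach_A w : exists n, reach A w n.
  have [n [g [g0 [gn wg]]]] := linked_joined (conn2 (i a0) w).
  by exists n, g; split=> //; exists a0.
have A_convex a1 a2 : A a1 -> A a2 -> joined a1 a2 -> exists q Q, Q 0 = a1 /\ Q q = a2 /\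
    walk q Q /\ nonbacktracking q Q /\ forall k, k <= q -> A (Q k).
  move=> [b1 <-] [b2 <-] _.
  have [n [g [g0 [gn [wg ng]]]]] := joined_nonbacktracking (linked_joined (conn1 b1 b2)).
  exists n, (fun k => i (g k)); rewrite g0 gn; do 2!split=> //.
  by split; [exact: walk_map | split; [exact: nonbacktracking_map | move=> k _; exists (g k)]].
have f0_over w : A w -> p (u (inv w)) = v w by move=> [a <-]; rewrite invK uv.
have f0_edge w w' : A w -> A w' -> adj w w' -> cedge (u (inv w)) (u (inv w')).
  move=> [b <-] [b' <-] /(tree_cmap_adj tree1 T2_ac inj) [_ bb'].
  by rewrite !invK; apply: cmap_cedge.
have [l [l_base lp]] :=
  forest_lift reach_A T2_ac A_convex (th_fib_edge_lifting trivfib.2) f0_over f0_edge T2_rg.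
by exists l; split=> // a; rewrite l_base ?invK //; exists a.
Qed.

Theorem corollary6p8 :
  (forall T : cpx, is_forest T -> th_cofibrant T) /\
  (forall (T1 T2 : cpx) (i : cmap T1 T2),
      is_tree T1 -> is_tree T2 -> injective (cmf i) -> th_cof i).
Proof. by split; [exact: forest_cofibrant | exact: tree_inclusion_cofibration]. Qed.
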